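(* Let $\alpha\in[0,1]$ and $$S=\{(c,\ell)\in[0,1]\times[0,2L] : c\le\alpha,\ \ell\le 2L(1-\alpha)\}.$$ Then $S$ is approachable in the game with payoff $m$: there is a strategy of the learner such that, for every strategy of the opponent, $d(\overline{m}_T,S)\to 0$ almost surely as $T\to\infty$.
   Context: Fix $n\ge1$, $L>0$ and calibration scores $s_{(1)}<\dots<s_{(n)}$ in $[0,L)$, with $s_{(0)}=0$, $s_{(n+1)}=L$. Let $\mathcal{A}=\{k/(n+1):k=0,\dots,n+1\}$ and $\mathcal{B}=\{k/(n+1):k=1,\dots,n+1\}$. For $a\in\mathcal{A}$, the length of the conformal set is $\mathrm{Leb}(C_a)=2s_{(\lceil (n+1)(1-a)\rceil)}$ (so $\mathrm{Leb}(C_0)=2L$ and $\mathrm{Leb}(C_1)=0$). The vector payoff is $m:\mathcal{A}\times\mathcal{B}\to\mathbb{R}^2$, $m(a,b)=(\mathbf{1}_{b\le a},\ \mathrm{Leb}(C_a))$, extended bilinearly to mixed actions by $m(\boldsymbol{p},\boldsymbol{q})=\sum_{a,b}p_aq_b\,m(a,b)$ for $\boldsymbol p\in\Delta(\mathcal{A})$, $\boldsymbol q\in\Delta(\mathcal{B})$. Repeated game: at each round $t\ge1$ the learner chooses $\boldsymbol p_t\in\Delta(\mathcal{A})$ and the opponent chooses $\boldsymbol q_t\in\Delta(\mathcal{B})$, both as functions of the past history; then $a_t\sim\boldsymbol p_t$ and $b_t\sim\boldsymbol q_t$ are drawn independently given the past. Write $\overline m_T=\frac1T\sum_{t=1}^T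 m(a_t,b_t)$, and $d(x,S)=\min_{c\in S}\|x-c\|$ for the Euclidean norm. *)

From HB Require Import structures.
From mathcomp Require Import all_boot all_order all_algebra.
From mathcomp Require Import all_classical all_reals all_analysis.
Set Implicit Arguments. Unset Strict Implicit. Unset Printing Implicit Defensive.
Import Order.TTheory GRing.Theory Num.Theory.
Import numFieldNormedType.Exports.
Local Open Scope classical_set_scope.
Local Open Scope ring_scope.

(* Learner actions: k : 'I_(n+2) stands for a = k/(n+1)  (the set A).
   Opponent actions: j : 'I_(n+1) stands for b = (j+1)/(n+1) (the set B). *)
Definition Aact (n : nat) := 'I_n.+2.
Definition Bact (n : nat) := 'I_n.+1.

Definition aval {R : realType} (n : nat) (k : 'I_n.+2) : R := k%:R / n.+1%:R.
Definition bval {R : realType} (n : nat) (j : 'I_n.+1) : R := j.+1%:R / n.+1%:R.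

(* Extended order statistics s_(0) = 0, s_(n+1) = L, s_(1..n) the scores. *)
Definition sorted_scores {R : realType} (n : nat) (L : R) (s : nat -> R) : Prop :=
  [/\ s 0%N = 0, s n.+1 = L,
      (forall k, (1 <= k <= n)%N -> 0 <= s k /\ s k < L)
    & (forall k, (1 <= k < n)%N -> s k < s k.+1)].

(* Leb(C_a) = 2 s_(ceil((n+1)(1-a))); for a = k/(n+1), (n+1)(1-a) = n+1-k. *)
Definition lebC {R : realType} (n : nat) (s : nat -> R) (k : 'I_n.+2) : R :=
  2 * s (n.+1 - k)%N.

Definition payoff {R : realType} (n : nat) (s : nat -> R)
  (k : 'I_n.+2) (j : 'I_n.+1) : R * R :=
  (((@bval R n j <= @aval R n k)%R : bool)%:R, lebC s k).

Definition is_dist {R : realType} (X : finType) (p : {ffun X -> R}) : Prop :=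
  (forall x, 0 <= p x) /\ \sum_(x : X) p x = 1.

Definition history (n : nat) := seq ('I_n.+2 * 'I_n.+1).

Definition lstrategy (R : realType) (n : nat) := history n -> {ffun 'I_n.+2 -> R}.
Definition ostrategy (R : realType) (n : nat) := history n -> {ffun 'I_n.+1 -> R}.

Definition valid_lstrat {R : realType} n (sg : lstrategy R n) : Prop :=
  forall h, is_dist (sg h).
Definition valid_ostrat {R : realType} n (tau : ostrategy R n) : Prop :=
  forall h, is_dist (tau h).

Definition hist_at {T : Type} n (a : nat -> T -> 'I_n.+2) (b : nat -> T -> 'I_n.+1)
  (t : nat) (w : T) : history n :=
  [seq (a i w, b i w) | i <- iota 0 t].

(* The random play (a_t, b_t) follows the repeated game with strategies sg, tau:
   given the past history h, a_t ~ sg h and b_t ~ tau h independently. *)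
Definition plays_according {R : realType} {d : measure_display}
  {T : measurableType d} (P : probability T R) n
  (sg : lstrategy R n) (tau : ostrategy R n)
  (a : nat -> T -> 'I_n.+2) (b : nat -> T -> 'I_n.+1) : Prop :=
  [/\ (forall t x, measurable (a t @^-1` [set x])),
      (forall t y, measurable (b t @^-1` [set y]))
    & (forall t (h : history n) x y, size h = t ->
        P [set w | hist_at a b t w = h /\ a t w = x /\ b t w = y] =
        (P [set w | hist_at a b t w = h] * (sg h x * tau h y)%:E)%E)].

Definition avg_payoff {R : realType} {T : Type} n (s : nat -> R)
  (a : nat -> T -> 'I_n.+2) (b : nat -> T -> 'I_n.+1) (w : T) (N : nat) : R * R :=
  (N%:R^-1 * \sum_(t < N) (payoff s (a t w) (b t w)).1,
   N%:R^-1 * \sum_(t < N) (payoff s (a t w) (b t w)).2).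

Definition dist2 {R : realType} (x : R * R) (S : set (R * R)) : R :=
  inf [set Num.sqrt ((x.1 - y.1) ^+ 2 + (x.2 - y.2) ^+ 2) | y in S].

Definition target_set {R : realType} (L alpha : R) : set (R * R) :=
  [set x | [/\ 0 <= x.1 <= 1, 0 <= x.2 <= 2 * L, x.1 <= alpha
           & x.2 <= 2 * L * (1 - alpha)]].

From HB Require Import structures.
From mathcomp Require Import all_boot all_order all_algebra.
From mathcomp Require Import all_classical all_reals all_analysis.
From mathcomp Require Import ring lra.
Import Order.TTheory GRing.Theory Num.Theory.
Import numFieldNormedType.Exports.
Local Open Scope classical_set_scope.
Local Open Scope ring_scope.

(* The learner needs no randomness and ignores the opponent.  Action a = 1
   yields payoff (1, 0) whatever b is, action a = 0 yields (0, 2L).  Playing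
   a = 1 in exactly floor(alpha N) of the first N rounds makes the average
   payoff (q, 2L(1 - q)) with q = floor(alpha N) / N in (alpha - 1/N, alpha];
   the point (q, 2L(1 - alpha)) lies in S at distance at most 2L/N.  Since the
   strategy is pure, the realized actions follow this schedule almost surely. *)

Section Quota.
Variables (R : realType) (alpha : R).

(* quota t = floor (alpha t), built greedily so that it grows by at most one
   per round. *)
Fixpoint quota (t : nat) : nat :=
  if t is t'.+1 then
    if (quota t').+1%:R <= alpha * t%:R then (quota t').+1 else quota t'
  else 0.

Definition quota_step (t : nat) : bool := quota t.+1 == (quota t).+1.

Lemma quotaS t : quota t.+1 = (quota t + quota_step t)%N.
Proof.
rewrite /quota_step /=; case: ifP => _; first by rewrite eqxx addn1.
by rewrite ltn_eqF ?addn0.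
Qed.

Lemma sum_quota_step N : \sum_(t < N) (quota_step t)%:R = (quota N)%:R :> R.
Proof.
elim: N => [|N IH]; first by rewrite big_ord0.
by rewrite big_ord_recr IH quotaS natrD.
Qed.

Lemma quota_bounds t : 0 <= alpha <= 1 ->
  (quota t)%:R <= alpha * t%:R < (quota t).+1%:R.
Proof.
move=> /andP[alpha_ge0 alpha_le1].
elim: t => [|t /andP[lo hi]] /=; first by rewrite mulr0 lexx ltr01.
rewrite !mulrSr in hi *; case: ifP => [le_next | /negbT]; rewrite ?mulrSr.
  by apply/andP; split => //; lra.
by rewrite -ltNge => gt_next; apply/andP; split => //; nra.
Qed.

End Quota.
Arguments quota {R} alpha t.
Arguments quota_step {R} alpha t.

Lemma negligible_bigcup_countable {d} {T : sigmaRingType d} {R : realFieldType}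
    (mu : {measure set T -> \bar R}) (U : countType) (F : U -> set T) :
  (forall u, mu.-negligible (F u)) -> mu.-negligible (\bigcup_u F u).
Proof.
move=> negF.
apply: negligibleS (negligible_bigcup (F := fun k => oapp F set0 (unpickle k)) _).
  by move=> w [u _ Fuw]; exists (pickle u) => //=; rewrite pickleK.
by move=> k /=; case: unpickle => [u|] /=; [exact: negF | exact: negligible_set0].
Qed.

Section History.
Variables (T : Type) (n : nat) (a : nat -> T -> 'I_n.+2) (b : nat -> T -> 'I_n.+1).

Lemma size_hist_at t w : size (hist_at a b t w) = t.
Proof. by rewrite size_map size_iota. Qed.

Lemma hist_atS t w : hist_at a b t.+1 w = rcons (hist_at a b t w) (a t w, b t w).
Proof. by rewrite /hist_at -(addn1 t) iotaD map_cat cats1. Qed.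

Lemma hist_atS_eq_rcons t w h x y :
  hist_at a b t.+1 w = rcons h (x, y) <->
  hist_at a b t w = h /\ a t w = x /\ b t w = y.
Proof.
rewrite hist_atS; split; last by case=> -> [-> ->].
by move/eqP; rewrite eqseq_rcons => /andP[/eqP -> /eqP [-> ->]].
Qed.

End History.

Lemma measurable_hist_at {d} {T : measurableType d} n
    (a : nat -> T -> 'I_n.+2) (b : nat -> T -> 'I_n.+1) :
  (forall t x, measurable (a t @^-1` [set x])) ->
  (forall t y, measurable (b t @^-1` [set y])) ->
  forall t (h : history n), measurable [set w | hist_at a b t w = h].
Proof.
move=> ma mb; elim=> [|t IH] h.
  case: h => [|z h].
    by rewrite [X in measurable X](_ : _ = setT) //; apply/seteqP; split.
  by rewrite [X in measurable X](_ : _ = set0) //; apply/seteqP; split.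
case/lastP: h => [|h [x y]].
  by rewrite [X in measurable X](_ : _ = set0) //; apply/seteqP; split => w //=.
rewrite [X in measurable X](_ : _ = [set w | hist_at a b t w = h] `&`
                           (a t @^-1` [set x] `&` b t @^-1` [set y])).
  by apply: measurableI => //; exact: measurableI.
by apply/seteqP; split => w /hist_atS_eq_rcons.
Qed.

Lemma ae_action_in_support {R : realType} {d} {T : measurableType d}
    {P : probability T R} {n} {sg : lstrategy R n} {tau : ostrategy R n}
    {a : nat -> T -> 'I_n.+2} {b : nat -> T -> 'I_n.+1} :
  plays_according P sg tau a b ->
  forall t, {ae P, forall w, sg (hist_at a b t w) (a t w) != 0}.
Proof.
move=> [ma mb play] t.
pose U := (history n * ('I_n.+2 * 'I_n.+1))%type.
pose F (u : U) := if (size u.1 == t) && (sg u.1 u.2.1 == 0)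
  then [set w | hist_at a b t w = u.1 /\ a t w = u.2.1 /\ b t w = u.2.2] else set0.
apply: negligibleS (@negligible_bigcup_countable _ _ _ P U F _).
  move=> w /negP /negbNE sg0; exists (hist_at a b t w, (a t w, b t w)) => //.
  by rewrite /F size_hist_at eqxx sg0.
move=> [h [x y]]; rewrite /F /=.
case: ifP => [/andP[/eqP sz /eqP sg0] | _]; last exact: negligible_set0.
have mE : measurable [set w | hist_at a b t w = h /\ a t w = x /\ b t w = y].
  rewrite [X in measurable X](_ : _ = [set w | hist_at a b t.+1 w = rcons h (x, y)]).
    exact: measurable_hist_at.
  by apply/seteqP; split => w /hist_atS_eq_rcons.
apply/negligibleP => //; apply: eq_trans (play _ _ _ _ sz) _.
by rewrite sg0 mul0r mule0.
Qed.

Definition pure_lstrategy {R : realType} {n} (f : nat -> 'I_n.+2) : lstrategy R n :=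
  fun h => [ffun k => (k == f (size h))%:R].

Lemma pure_lstrategy_valid {R : realType} n (f : nat -> 'I_n.+2) :
  valid_lstrat (@pure_lstrategy R n f).
Proof.
move=> h; split=> [k|]; first by rewrite ffunE ler0n.
rewrite (bigD1 (f (size h))) //= ffunE eqxx big1 ?addr0 // => k /negbTE fk.
by rewrite ffunE fk.
Qed.

Lemma ae_pure_lstrategy {R : realType} {d} {T : measurableType d}
    {P : probability T R} {n} {f : nat -> 'I_n.+2} {tau : ostrategy R n}
    {a : nat -> T -> 'I_n.+2} {b : nat -> T -> 'I_n.+1} :
  plays_according P (pure_lstrategy f) tau a b ->
  {ae P, forall w t, a t w = f t}.
Proof.
move=> play; apply: ae_foralln => t.
have := ae_action_in_support play t; apply: filterS => w.
by rewrite ffunE size_hist_at pnatr_eq0 eqb0 negbK => /eqP.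
Qed.

Section QuotaPlay.
Variables (R : realType) (n : nat) (s : nat -> R) (L : R).
Hypotheses (s0 : s 0 = 0) (sL : s n.+1 = L).

Lemma payoff_ord_max (j : 'I_n.+1) : payoff s ord_max j = (1, 0).
Proof.
rewrite /payoff /lebC subnn s0 mulr0.
have -> : @aval R n ord_max = 1 by rewrite /aval divff // pnatr_eq0.
by rewrite /bval ler_pdivrMr ?ltr0Sn // mul1r ler_nat ltn_ord.
Qed.

Lemma payoff_ord0 (j : 'I_n.+1) : payoff s ord0 j = (0, 2 * L).
Proof.
rewrite /payoff /lebC subn0 sL.
have -> : @aval R n ord0 = 0 by rewrite /aval mul0r.
by rewrite /bval lt_geF // divr_gt0 ?ltr0Sn.
Qed.

Definition quota_action (alpha : R) (t : nat) : 'I_n.+2 :=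
  if quota_step alpha t then ord_max else ord0.

Lemma avg_payoff_quota_action {T : Type} (alpha : R)
    (a : nat -> T -> 'I_n.+2) (b : nat -> T -> 'I_n.+1) w :
  (forall t, a t w = quota_action alpha t) ->
  forall N, avg_payoff s a b w N = (N%:R^-1 * (quota alpha N)%:R,
                                    N%:R^-1 * (2 * L * (N%:R - (quota alpha N)%:R))).
Proof.
move=> aw N.
have pay t : payoff s (a t w) (b t w) =
    ((quota_step alpha t)%:R, 2 * L * (1 - (quota_step alpha t)%:R)).
  rewrite aw /quota_action; case: quota_step.
    by rewrite payoff_ord_max subrr mulr0.
  by rewrite payoff_ord0 subr0 mulr1.
rewrite /avg_payoff; under eq_bigr => t _ do rewrite pay.
under [in X in (_, X)]eq_bigr => t _ do rewrite pay.
by rewrite /= sum_quota_step -mulr_sumr sumrB sumr_const card_ord sum_quota_step.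
Qed.

End QuotaPlay.
Arguments quota_action {R} n alpha t.
Arguments avg_payoff_quota_action {R n s L} s0 sL {T alpha a b w}.

Section Distance.
Variable R : realType.

Lemma dist2_ge0 (x : R * R) (S : set (R * R)) : 0 <= dist2 x S.
Proof.
have [->|/set0P[y Sy]] := eqVneq S set0; first by rewrite /dist2 image_set0 inf0.
apply: lb_le_inf; first by exists (Num.sqrt ((x.1 - y.1) ^+ 2 + (x.2 - y.2) ^+ 2)), y.
by move=> _ [z _ <-]; exact: sqrtr_ge0.
Qed.

Lemma dist2_le (x y : R * R) (S : set (R * R)) : S y ->
  dist2 x S <= Num.sqrt ((x.1 - y.1) ^+ 2 + (x.2 - y.2) ^+ 2).
Proof.
move=> Sy; apply: ge_inf; last by exists y.
by exists 0 => _ [z _ <-]; exact: sqrtr_ge0.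
Qed.

Lemma dist2_target_set_le (L alpha : R) (N c : nat) :
  0 < L -> 0 <= alpha <= 1 -> (0 < N)%N -> c%:R <= alpha * N%:R < c.+1%:R ->
  dist2 (N%:R^-1 * c%:R, N%:R^-1 * (2 * L * (N%:R - c%:R))) (target_set L alpha)
  <= 2 * L / N%:R.
Proof.
move=> L_gt0 /andP[alpha_ge0 alpha_le1] N_gt0 /andP[c_le c_gt].
rewrite mulrSr in c_gt.
set q := N%:R^-1.
have qN : q * N%:R = 1 by rewrite mulVf // pnatr_eq0 -lt0n.
have q_gt0 : 0 < q by rewrite invr_gt0 ltr0n.
have c_le_alpha : q * c%:R <= alpha by nra.
have target_y : target_set L alpha (q * c%:R, 2 * L * (1 - alpha)).
  have c_ge0 : 0 <= c%:R :> R by [].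
  rewrite /target_set /=; split => //; apply/andP; split; nra.
apply: le_trans (dist2_le _ _ _ target_y) _ => /=.
have -> : q * (2 * L * (N%:R - c%:R)) - 2 * L * (1 - alpha) =
          2 * L * q * (alpha * N%:R - c%:R).
  apply/eqP; rewrite -subr_eq0.
  have -> : q * (2 * L * (N%:R - c%:R)) - 2 * L * (1 - alpha) -
            2 * L * q * (alpha * N%:R - c%:R) = 2 * L * (1 - alpha) * (q * N%:R - 1).
    by ring.
  by rewrite qN subrr mulr0.
rewrite subrr expr0n add0r sqrtr_sqr normrM (ger0_norm (ltW _)) ?mulr_gt0 //.
rewrite ger0_norm ?subr_ge0 // -[leRHS]mulr1 ler_pM2l ?mulr_gt0 //; lra.
Qed.

End Distance.

Lemma cvg_div_nat {R : realType} (k : R) : (fun N : nat => k / N%:R) @ \oo --> 0.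
Proof.
rewrite -cvg_shiftS /=.
have := cvgM (cvg_cst k) (@cvg_harmonic R); rewrite mulr0; apply.
Qed.

Theorem lemma3 (R : realType) (n : nat) (L : R) (s : nat -> R) (alpha : R) :
  (1 <= n)%N -> 0 < L -> sorted_scores n L s ->
  0 <= alpha <= 1 ->
  exists sg : lstrategy R n, valid_lstrat sg /\
    forall (tau : ostrategy R n), valid_ostrat tau ->
    forall (d : measure_display) (T : measurableType d) (P : probability T R)
           (a : nat -> T -> 'I_n.+2) (b : nat -> T -> 'I_n.+1),
      plays_according P sg tau a b ->
      {ae P, forall w,
        (fun N : nat => dist2 (avg_payoff s a b w N) (target_set L alpha))
          @ \oo --> (0 : R)}.
Proof.
move=> _ L_gt0 [s0 sL _ _] alpha01.
exists (pure_lstrategy (quota_action n alpha)); split=> [|tau _ d T P a b play].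
  exact: pure_lstrategy_valid.
have := ae_pure_lstrategy play; apply: filterS => w aw.
apply: (squeeze_cvgr _ (cvg_cst 0) (cvg_div_nat (2 * L))).
near=> N; have N_gt0 : (0 < N)%N by near: N; exists 1%N.
rewrite (avg_payoff_quota_action s0 sL aw) dist2_ge0 /=.
by apply: dist2_target_set_le => //; exact: quota_bounds.
Unshelve. all: by end_near.
Qed.
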